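(* Let $C_1$ and $C_2$ be maximal configurations of finite labeled prime event structures $\mathcal{E}_1$ and $\mathcal{E}_2$, respectively. If $C_1\sqsubset_S C_2$, then $\mathcal{L}(C_1)\subseteq\mathcal{L}(C_2)$.
   Context: A finite $\mathcal{X}$-labeled prime event structure is $\mathcal{E}=\langle E,<,\#,h\rangle$ with finite $E$, strict partial order $<$, labeling $h:E\to\mathcal{X}$, and symmetric irreflexive conflict relation $\#$ closed under $<$; $\mathcal{X}$ contains $\varepsilon$ denoting the empty word; there is an event $\bot$ below all other events with $h(\bot)=\varepsilon$. A configuration is a left-closed, conflict-free subset of $E$; maximal if no configuration strictly contains it. A trace of a configuration $C$ lists every event of $C$ exactly once such that $e_i<e_j$ implies $i<j$; $\mathcal{L}(C)=\{h(t)\mid t$ a trace of $C\}$ (labels applied pointwise, $\varepsilon$ omitted). For $\mathcal{E}_i=\langle E_i,<_i,\#_i,h_i\rangle$, a mapping $\varphi:C_1\to C_2$ is a sufficient embedding if (A) $\varphi$ is bijective, (B) $h_1(e)=h_2(\varphi(e))$ for all $e\in C_1$, and (C) for all $e_1,e_2\in C_1$, $\varphi(e_1)<_2\varphi(e_2)$ implies $e_1<_1e_2$. $C_1\sqsubset_S C_2$ means a sufficient embedding from $C_1$ to $C_2$ exists. *)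

From mathcomp Require Import all_boot.
Set Implicit Arguments. Unset Strict Implicit. Unset Printing Implicit Defensive.

(* Finite X-labeled prime event structures. Events form a finite type E;
   labels come from an eqType X with a distinguished label eps (the empty word). *)
Record pes (X : eqType) (eps : X) := PES {
  ev :> finType;
  pes_lt : rel ev;
  pes_cf : rel ev;
  pes_h  : ev -> X;
  pes_bot : ev;
  lt_irr : forall e, ~~ pes_lt e e;
  lt_trans : forall e1 e2 e3, pes_lt e1 e2 -> pes_lt e2 e3 -> pes_lt e1 e3;
  cf_sym : forall e1 e2, pes_cf e1 e2 = pes_cf e2 e1;
  cf_irr : forall e, ~~ pes_cf e e;
  cf_hered : forall e1 e2 e3, pes_cf e1 e2 -> pes_lt e2 e3 -> pes_cf e1 e3;
  bot_least : forall e, e != pes_bot -> pes_lt pes_bot e;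
  bot_label : pes_h pes_bot = eps
}.

Section Defs.
Variables (X : eqType) (eps : X).

Definition config (E : pes eps) (C : {set E}) : Prop :=
  (forall e e', e' \in C -> pes_lt e e' -> e \in C) /\
  (forall e e', e \in C -> e' \in C -> ~~ pes_cf e e').

Definition maximal_config (E : pes eps) (C : {set E}) : Prop :=
  config C /\ forall D : {set E}, config D -> C \subset D -> D = C.

Definition trace (E : pes eps) (C : {set E}) (t : seq E) : Prop :=
  uniq t /\ (forall e, (e \in t) = (e \in C)) /\
  forall i j, i < size t -> j < size t ->
    pes_lt (nth (pes_bot E) t i) (nth (pes_bot E) t j) -> i < j.

Definition word (E : pes eps) (t : seq E) : seq X :=
  [seq a <- map (@pes_h _ _ E) t | a != eps].

Definition lang (E : pes eps) (C : {set E}) (w : seq X) : Prop :=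
  exists t, trace C t /\ word t = w.

Definition suff_embedding (E1 E2 : pes eps) (C1 : {set E1}) (C2 : {set E2})
    (phi : E1 -> E2) : Prop :=
  {in C1 &, injective phi} /\ phi @: C1 = C2 /\
  {in C1, forall e, pes_h (phi e) = pes_h e} /\
  {in C1 &, forall e1 e2, pes_lt (phi e1) (phi e2) -> pes_lt e1 e2}.

Definition suff_embeds (E1 E2 : pes eps) (C1 : {set E1}) (C2 : {set E2}) : Prop :=
  exists phi, suff_embedding C1 C2 phi.

End Defs.

From mathcomp Require Import all_boot.

(* The embedding transports every trace t of C1 to the trace [map phi t] of
   C2: bijectivity makes it list each event of C2 once, reflection of
   causality keeps it causally ordered, and preservation of labels gives it
   the same word. *)

Section SufficientEmbedding.
Variables (X : eqType) (eps : X) (E1 E2 : pes eps).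

Lemma word_map (phi : E1 -> E2) (t : seq E1) :
  {in t, forall e, pes_h (phi e) = pes_h e} -> word (map phi t) = word t.
Proof.
by move=> phi_h; rewrite /word -map_comp; congr filter; apply/eq_in_map.
Qed.

Variables (C1 : {set E1}) (C2 : {set E2}) (phi : E1 -> E2).
Hypothesis phi_emb : suff_embedding C1 C2 phi.

Lemma trace_map_suff_embedding (t : seq E1) :
  trace C1 t -> trace C2 (map phi t).
Proof.
case: phi_emb => phi_inj [phi_C1 [_ phi_lt]] [t_uniq [t_mem t_lt]].
have tC1 : {subset t <= C1} by move=> e; rewrite t_mem.
split.
  by rewrite map_inj_in_uniq // => x y /tC1 xC1 /tC1 yC1; apply: phi_inj.
split.
  move=> e; rewrite -phi_C1; apply/mapP/imsetP => -[x xt ->].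
    by exists x; rewrite ?tC1.
  by exists x; rewrite ?t_mem.
rewrite size_map => i j ilt jlt.
rewrite !(nth_map (pes_bot E1)) // => lt_ij.
by apply: t_lt => //; apply: phi_lt => //; apply/tC1/mem_nth.
Qed.

Lemma lang_suff_embedding (w : seq X) : lang C1 w -> lang C2 w.
Proof.
case=> t [t_tr <-]; exists (map phi t).
split; first exact: trace_map_suff_embedding.
case: phi_emb t_tr => _ [_ [phi_h _]] [_ [t_mem _]].
by apply: word_map => e et; apply: phi_h; rewrite -t_mem.
Qed.

End SufficientEmbedding.

Theorem lemma2 (X : eqType) (eps : X) (E1 E2 : pes eps)
    (C1 : {set E1}) (C2 : {set E2}) :
  maximal_config C1 -> maximal_config C2 -> suff_embeds C1 C2 ->
  forall w : seq X, lang C1 w -> lang C2 w.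
Proof. by move=> _ _ [phi phi_emb] w; apply: lang_suff_embedding phi_emb w. Qed.
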